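(* There is an absolute constant $c>0$ such that the following holds. Let $r,r'>1$ be conjugate indices ($1/r+1/r'=1$), let $z\in\mathbb R^N$, and let $V\subset\mathbb R^N$ satisfy Structural Assumption A with $p=r'$ (for some integer $s_0\ge0$, admissible sequence $(V_s)$ with maps $\pi_s$, seminorms $\|\cdot\|_{[s]}$, $\|\cdot\|$, and integers $(j_s)_{s\ge s_0}$). Let $\varepsilon_1,\dots,\varepsilon_N$ be independent symmetric $\{-1,1\}$-valued random variables. Then for every $t\ge4$, with probability at least $1-2\exp(-ct^22^{s_0})$, for every $v\in V$, $$\left|\sum_{i=1}^N\varepsilon_iz_iv_i\right|\le2\|z\|_{\ell_2^N}\Lambda(V)+t\,\Theta(V)\,N^{1/2r'}\Big(\sum_{i\ge j_{s_0}}(z_i^* )^{2r}\Big)^{1/2r}.$$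
   Context: For $x\in\mathbb R^N$, $(x_i^* )_{i=1}^N$ is the nonincreasing rearrangement of $(|x_i|)_{i=1}^N$; empty sums are $0$. An admissible sequence of $V$ is a sequence of subsets $(V_s)_{s\ge0}$ with $|V_0|=1$, $|V_s|\le2^{2^s}$. Structural Assumption A (parameter $p\ge1$): $s_0\ge0$ is an integer, $(V_s)_{s\ge0}$ an admissible sequence of $V$, $\pi_s:V\to V_s$ maps, $\Delta_sv=\pi_{s+1}v-\pi_sv$, and for every $v\in V$, $v=\pi_{s_0}v+\sum_{s\ge s_0}\Delta_sv$ (convergent series). $(\|\cdot\|_{[s]})_{s\ge s_0}$ is a family of seminorms on $\mathbb R^N$ and $\|\cdot\|$ another seminorm on $\mathbb R^N$. $(j_s)_{s\ge s_0}$ is a nondecreasing sequence of integers with $1\le j_s\le N+1$. For every $s\ge s_0$ and $v\in V$: $\big(\sum_{i<j_s}((\Delta_sv)_i^* )^2\big)^{1/2}\le\|\Delta_sv\|_{[s]}$, $\big(\sum_{i\ge j_s}((\Delta_sv)_i^* )^{2p}\big)^{1/2p}\le\|\Delta_sv\|N^{1/2p}$, $\big(\sum_{i<j_s}((\pi_sv)_i^* )^2\big)^{1/2}\le\|\pi_sv\|_{[s]}$, $\big(\sum_{i\ge j_s}((\pi_sv)_i^* )^{2p}\big)^{1/2p}\le\|\pi_sv\|N^{1/2p}$. Set $\Lambda(V)=\sup_{v\in V}\big(\sum_{s\ge s_0}\|\Delta_sv\|_{[s]}+\|\pi_{s_0}v\|_{[s_0]}\big)$ and $\Theta(V)=\sup_{v\in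 V}\big(\sum_{s\ge s_0}2^{s/2}\|\Delta_sv\|+2^{s_0/2}\|\pi_{s_0}v\|\big)$. *)

From Stdlib Require Import Reals Lra Lia List ClassicalEpsilon.
Import ListNotations.
Open Scope R_scope.

(* Vectors of R^N are represented as functions nat -> R, coordinate i
   (0-based, i < N) being the paper's coordinate i+1; coordinates >= N vanish. *)
Definition vec := nat -> R.
Definition inRN (N : nat) (x : vec) : Prop := forall i, (N <= i)%nat -> x i = 0.

Definition vsub (x y : vec) : vec := fun i => x i - y i.
Definition vadd (x y : vec) : vec := fun i => x i + y i.
Definition vscal (a : R) (x : vec) : vec := fun i => a * x i.

Definition is_seminorm (N : nat) (nm : vec -> R) : Prop :=
  (forall x, inRN N x -> 0 <= nm x) /\
  (forall x y, inRN N x -> inRN N y -> nm (vadd x y) <= nm x + nm y) /\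
  (forall a x, inRN N x -> nm (vscal a x) = Rabs a * nm x).

(* sum_{k=m}^{n} f k ; empty (= 0) when n < m *)
Definition sumI (m n : nat) (f : nat -> R) : R :=
  fold_right (fun k acc => f k + acc) 0 (seq m (S n - m)).

Definition sumN (m n : nat) (f : nat -> R) : R :=
  fold_right (fun k acc => f k + acc) 0 (seq m n).

(* real power with the convention 0^b = 0 (used only for b > 0) *)
Definition rpow (a b : R) : R := if Rlt_dec 0 a then Rpower a b else 0.

Fixpoint insert_desc (a : R) (l : list R) : list R :=
  match l with
  | [] => [a]
  | b :: l' => if Rle_dec b a then a :: l else b :: insert_desc a l'
  end.
Definition sort_desc (l : list R) : list R := fold_right insert_desc [] l.

(* rearr N x k = x^*_k for 1 <= k <= N (paper's 1-based index) *)
Definition rearr (N : nat) (x : vec) (k : nat) : R :=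
  nth (k - 1) (sort_desc (map (fun i => Rabs (x i)) (seq 0 N))) 0.

Definition l2norm (N : nat) (x : vec) : R := sqrt (sumN 0 N (fun i => x i ^ 2)).

(* "|A| <= k" for a possibly infinite set of vectors *)
Definition card_le (A : vec -> Prop) (k : nat) : Prop :=
  exists l : list vec, (length l <= k)%nat /\ forall x, A x -> In x l.
Definition card_eq1 (A : vec -> Prop) : Prop :=
  exists x0, forall x, A x <-> x = x0.

Definition StructA (N : nat) (p : R) (V : vec -> Prop) (s0 : nat)
  (Vs : nat -> vec -> Prop) (pi : nat -> vec -> vec)
  (nms : nat -> vec -> R) (nm : vec -> R) (j : nat -> nat) : Prop :=
  (forall v, V v -> inRN N v) /\
  (* admissible sequence of V *)
  (forall s x, Vs s x -> V x) /\
  card_eq1 (Vs 0%nat) /\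
  (forall s, card_le (Vs s) (2 ^ (2 ^ s))) /\
  (forall s v, V v -> Vs s (pi s v)) /\
  (forall v, V v -> forall i,
     Un_cv (fun n => pi s0 v i +
              sumN s0 n (fun s => vsub (pi (S s) v) (pi s v) i)) (v i)) /\
  (forall s, (s0 <= s)%nat -> is_seminorm N (nms s)) /\
  is_seminorm N nm /\
  (forall s s', (s0 <= s)%nat -> (s <= s')%nat -> (j s <= j s')%nat) /\
  (forall s, (s0 <= s)%nat -> (1 <= j s)%nat /\ (j s <= S N)%nat) /\
  (forall s v, (s0 <= s)%nat -> V v ->
     let D := vsub (pi (S s) v) (pi s v) in
     let P := pi s v in
     sqrt (sumI 1 (j s - 1) (fun i => rearr N D i ^ 2)) <= nms s D /\
     rpow (sumI (j s) N (fun i => rpow (rearr N D i) (2 * p))) (1 / (2 * p))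
       <= nm D * rpow (INR N) (1 / (2 * p)) /\
     sqrt (sumI 1 (j s - 1) (fun i => rearr N P i ^ 2)) <= nms s P /\
     rpow (sumI (j s) N (fun i => rpow (rearr N P i) (2 * p))) (1 / (2 * p))
       <= nm P * rpow (INR N) (1 / (2 * p))).

(* Lambda(V) = sup of the (nondecreasing) partial sums below *)
Definition Lambda_set (V : vec -> Prop) (s0 : nat) (pi : nat -> vec -> vec)
  (nms : nat -> vec -> R) : R -> Prop :=
  fun x => exists v n, V v /\
    x = sumN s0 n (fun s => nms s (vsub (pi (S s) v) (pi s v)))
        + nms s0 (pi s0 v).

Definition Theta_set (V : vec -> Prop) (s0 : nat) (pi : nat -> vec -> vec)
  (nm : vec -> R) : R -> Prop :=
  fun x => exists v n, V v /\
    x = sumN s0 n (fun s => sqrt (2 ^ s) * nm (vsub (pi (S s) v) (pi s v)))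
        + sqrt (2 ^ s0) * nm (pi s0 v).

(* Rademacher vectors: eps in {true,false}^N, uniform; eps_i = +1 / -1 *)
Fixpoint all_signs (N : nat) : list (list bool) :=
  match N with
  | O => [[]]
  | S n => map (cons true) (all_signs n) ++ map (cons false) (all_signs n)
  end.
Definition sgn (e : list bool) (i : nat) : R := if nth i e true then 1 else -1.

Definition prob (N : nat) (E : list bool -> Prop) : R :=
  fold_right (fun e acc =>
    (if excluded_middle_informative (E e) then 1 else 0) + acc) 0 (all_signs N)
  / 2 ^ N.

From Stdlib Require Import Reals List.
From Stdlib Require Import Lra Lia Permutation Sorted ClassicalEpsilon.
From Coquelicot Require Import Coquelicot.
Open Scope R_scope.

(* Every [v] in [V] is the limit of the chain [pi_s0 v + sum_s Delta_s v], so the Rademacher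
   sum [sum_i eps_i z_i v_i] is controlled by its values on the links [pi_s0 v] and
   [Delta_s v]. For a single link [w] at level [s], split the coordinates into a head, where
   [z] or [w] is among its [j_s - 1] largest entries in modulus, and the rest. On the head,
   Cauchy-Schwarz gives the deterministic bound [2 |z|_2 |w|_[s]]; on the rest, Hoeffding's
   inequality, with the [l_2] norm of the tail of [z w] bounded by Hoelder with exponents
   [r, r'], gives a deviation [t 2^(s/2) |w| N^(1/2r') (sum_(i>=j_s) (z_i^* )^(2r))^(1/2r)]
   outside an event of probability [2 exp (- t^2 2^s / 2)]. Level [s] has at most
   [2^(2^(s+1)) 2^(2^s)] links, so for [t >= 4] a union bound over all levels fails with
   probability at most [2 exp (- t^2 2^s0 / 8)]. Off that event, summing along the chain
   produces [Lambda(V)] and [Theta(V)], the tail factor at level [s] being dominated by the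
   one at [s0] because [j] is nondecreasing. *)

(** * Elementary inequalities *)

Lemma exp_le_mono x y : x <= y -> exp x <= exp y.
Proof.
  intros Hxy. destruct (Rle_lt_or_eq_dec _ _ Hxy) as [Hlt | ->].
  - now apply Rlt_le, exp_increasing.
  - apply Rle_refl.
Qed.

Lemma le_of_derive_nonneg (f df : R -> R) (a b : R) : a <= b ->
  (forall x, a <= x <= b -> is_derive f x (df x)) ->
  (forall x, a <= x <= b -> 0 <= df x) -> f a <= f b.
Proof.
  intros Hab Hd Hp. destruct (Rle_lt_or_eq_dec _ _ Hab) as [Hlt | ->]; [|lra].
  destruct (MVT_cor3 f df a b Hlt) as [c [Hac [Hcb ->]]].
  { intros x H1 H2. apply is_derive_Reals, Hd. lra. }
  assert (0 <= df c) by (apply Hp; lra). nra.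
Qed.

Lemma cosh_le_exp_sq_half (x : R) : (exp x + exp (- x)) / 2 <= exp (x ^ 2 / 2).
Proof.
  assert (Hnonneg : forall y, 0 <= y -> (exp y + exp (- y)) / 2 <= exp (y ^ 2 / 2)).
  { intros y Hy.
    (* [w cosh w >= sinh w] makes [cosh w * exp (- w^2/2)] nonincreasing on [0, +oo). *)
    assert (Hsinh : forall w, 0 <= w -> exp w - exp (- w) <= w * (exp w + exp (- w))).
    { intros w Hw.
      assert (H := le_of_derive_nonneg (fun w => w * (exp w + exp (- w)) - (exp w - exp (- w)))
                 (fun w => w * (exp w - exp (- w))) 0 w Hw).
      cbv beta in H. rewrite Ropp_0, exp_0 in H.
      enough (0 <= w * (exp w + exp (- w)) - (exp w - exp (- w))) by lra.
      replace 0 with (0 * (1 + 1) - (1 - 1)) by ring. apply H.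
      - intros u _. auto_derive; auto. ring.
      - intros u Hu. apply Rmult_le_pos; [lra|].
        assert (exp (- u) <= exp u) by (apply exp_le_mono; lra). lra. }
    assert (H := le_of_derive_nonneg (fun w => - ((exp w + exp (- w)) * exp (- (w ^ 2 / 2))))
      (fun w => (w * (exp w + exp (- w)) - (exp w - exp (- w))) * exp (- (w ^ 2 / 2))) 0 y Hy).
    cbv beta in H.
    replace (- ((exp 0 + exp (- 0)) * exp (- (0 ^ 2 / 2)))) with (-2) in H
      by (rewrite Ropp_0, exp_0; replace (- (0 ^ 2 / 2)) with 0 by field; rewrite exp_0; ring).
    assert (Hdec : (exp y + exp (- y)) * exp (- (y ^ 2 / 2)) <= 2).
    { enough (-2 <= - ((exp y + exp (- y)) * exp (- (y ^ 2 / 2)))) by lra. apply H.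
      - intros w _. auto_derive; auto.
        replace (w ^ 2 / 2) with (w * (w * 1) * / 2) by field.
        set (E := exp (- (w * (w * 1) * / 2))). field.
      - intros w Hw. apply Rmult_le_pos; [specialize (Hsinh w ltac:(lra)); lra|].
        apply Rlt_le, exp_pos. }
    assert (Hinv : exp (- (y ^ 2 / 2)) * exp (y ^ 2 / 2) = 1)
      by (rewrite <- exp_plus; replace (- (y ^ 2 / 2) + y ^ 2 / 2) with 0 by ring; apply exp_0).
    assert (Hpos : 0 < exp (y ^ 2 / 2)) by apply exp_pos.
    apply (Rmult_le_compat_r (exp (y ^ 2 / 2))) in Hdec; [|lra].
    rewrite Rmult_assoc, Hinv in Hdec. lra. }
  destruct (Rle_or_lt 0 x) as [Hx | Hx]; [now apply Hnonneg|].
  specialize (Hnonneg (- x) ltac:(lra)). rewrite Ropp_involutive in Hnonneg.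
  replace ((- x) ^ 2) with (x ^ 2) in Hnonneg by ring. lra.
Qed.

Lemma exp_convex (l x y : R) : 0 <= l <= 1 ->
  exp (l * x + (1 - l) * y) <= l * exp x + (1 - l) * exp y.
Proof.
  assert (Hord : forall l x y, 0 <= l <= 1 -> y <= x ->
            exp (l * x + (1 - l) * y) <= l * exp x + (1 - l) * exp y).
  { clear. intros l x y Hl Hyx.
    assert (H := le_of_derive_nonneg
      (fun w => l * exp w + (1 - l) * exp y - exp (l * w + (1 - l) * y))
      (fun w => l * (exp w - exp (l * w + (1 - l) * y))) y x Hyx).
    cbv beta in H. replace (l * y + (1 - l) * y) with y in H by ring.
    enough (0 <= l * exp x + (1 - l) * exp y - exp (l * x + (1 - l) * y)) by lra.
    replace 0 with (l * exp y + (1 - l) * exp y - exp y) by ring. apply H.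
    - intros w _. auto_derive; auto. ring.
    - intros w Hw. apply Rmult_le_pos; [lra|].
      assert (exp (l * w + (1 - l) * y) <= exp w) by (apply exp_le_mono; nra). lra. }
  intros Hl. destruct (Rle_or_lt y x); [now apply Hord|].
  specialize (Hord (1 - l) y x ltac:(lra) ltac:(lra)).
  replace (1 - (1 - l)) with l in Hord by ring. rewrite Rplus_comm in Hord. lra.
Qed.

Lemma rpow_pos a b : 0 < a -> rpow a b = Rpower a b.
Proof. intros H. unfold rpow. destruct (Rlt_dec 0 a); [auto|lra]. Qed.

Lemma rpow_nonpos a b : a <= 0 -> rpow a b = 0.
Proof. intros H. unfold rpow. destruct (Rlt_dec 0 a); [lra|auto]. Qed.

Lemma rpow_0 b : rpow 0 b = 0.
Proof. apply rpow_nonpos, Rle_refl. Qed.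

Lemma rpow_ge0 a b : 0 <= rpow a b.
Proof. unfold rpow. destruct (Rlt_dec 0 a); [apply Rlt_le, exp_pos | lra]. Qed.

Lemma rpow_gt0 a b : 0 < a -> 0 < rpow a b.
Proof. intros H. rewrite rpow_pos by auto. apply exp_pos. Qed.

Lemma rpow_eq0 a b : 0 <= a -> rpow a b = 0 -> a = 0.
Proof.
  intros Ha Hab. destruct (Rle_lt_or_eq_dec _ _ Ha) as [Hlt|]; auto.
  assert (H := rpow_gt0 a b Hlt). lra.
Qed.

Lemma rpow_le_base x y c : 0 <= x -> x <= y -> 0 <= c -> rpow x c <= rpow y c.
Proof.
  intros Hx Hxy Hc. destruct (Rle_lt_or_eq_dec _ _ Hx) as [Hlt | <-].
  - rewrite !rpow_pos by lra. now apply Rle_Rpower_l.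
  - rewrite rpow_0. apply rpow_ge0.
Qed.

Lemma rpow_div x a p : 0 <= x -> 0 < a -> rpow (x / a) p = rpow x p / rpow a p.
Proof.
  intros Hx Ha. destruct (Rle_lt_or_eq_dec _ _ Hx) as [Hlt | <-].
  - assert (0 < x / a) by (apply Rdiv_lt_0_compat; auto).
    rewrite !rpow_pos by auto. unfold Rpower, Rdiv.
    rewrite ln_mult, ln_Rinv by (auto; apply Rinv_0_lt_compat; auto).
    rewrite Rmult_plus_distr_l, exp_plus, <- Ropp_mult_distr_r, exp_Ropp. reflexivity.
  - unfold Rdiv. rewrite Rmult_0_l, !rpow_0. ring.
Qed.

Lemma rpow_rpow_inv X p : 0 < X -> p <> 0 -> rpow (rpow X (1 / p)) p = X.
Proof.
  intros HX Hp. rewrite (rpow_pos X), rpow_pos by (auto; apply exp_pos).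
  rewrite Rpower_mult. replace (1 / p * p) with 1 by (field; auto). now apply Rpower_1.
Qed.

Lemma rpow_abs_double x p : rpow (x ^ 2) p = rpow (Rabs x) (2 * p).
Proof.
  destruct (Req_dec x 0) as [-> | Hx].
  - rewrite Rabs_R0. replace (0 ^ 2) with 0 by ring. now rewrite !rpow_0.
  - assert (0 < Rabs x) by now apply Rabs_pos_lt.
    assert (E : x ^ 2 = Rpower (Rabs x) 2).
    { replace 2 with (INR 2) by (simpl; ring). rewrite Rpower_pow by auto. now rewrite pow2_abs. }
    rewrite E, !rpow_pos, Rpower_mult by (auto; apply exp_pos). reflexivity.
Qed.

Lemma rpow_2 x : 0 <= x -> rpow x 2 = x ^ 2.
Proof.
  intros H. destruct (Rle_lt_or_eq_dec _ _ H) as [Hlt | <-].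
  - rewrite rpow_pos by auto. replace 2 with (INR 2) by (simpl; ring). now rewrite Rpower_pow.
  - rewrite rpow_0. ring.
Qed.

Lemma rpow_half x : 0 <= x -> rpow x (1 / 2) = sqrt x.
Proof.
  intros H. destruct (Rle_lt_or_eq_dec _ _ H) as [Hlt | <-].
  - rewrite rpow_pos by auto. replace (1 / 2) with (/ 2) by field. now apply Rpower_sqrt.
  - now rewrite rpow_0, sqrt_0.
Qed.

Lemma rpow_inv_double_sq X p : 0 <= X -> p <> 0 -> rpow X (1 / (2 * p)) ^ 2 = rpow X (1 / p).
Proof.
  intros H Hp. destruct (Rle_lt_or_eq_dec _ _ H) as [Hlt | <-].
  - rewrite !rpow_pos by auto. simpl. rewrite Rmult_1_r. unfold Rpower.
    rewrite <- exp_plus. f_equal. field. auto.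
  - rewrite !rpow_0. ring.
Qed.

Lemma young (a b p q : R) : 0 <= a -> 0 <= b -> 1 < p -> 1 < q -> 1 / p + 1 / q = 1 ->
  a * b <= rpow a p / p + rpow b q / q.
Proof.
  intros Ha Hb Hp Hq Hpq.
  assert (0 <= rpow a p / p) by (apply Rdiv_le_0_compat; [apply rpow_ge0 | lra]).
  assert (0 <= rpow b q / q) by (apply Rdiv_le_0_compat; [apply rpow_ge0 | lra]).
  destruct (Rle_lt_or_eq_dec _ _ Ha) as [Ha' | <-]; [|lra].
  destruct (Rle_lt_or_eq_dec _ _ Hb) as [Hb' | <-]; [|lra].
  rewrite !rpow_pos by auto. unfold Rpower.
  assert (0 < 1 / q) by (apply Rdiv_lt_0_compat; lra).
  assert (Hl : 0 <= 1 / p <= 1) by (split; [apply Rdiv_le_0_compat|]; lra).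
  (* weighted AM-GM, i.e. convexity of exp at [p ln a] and [q ln b] *)
  assert (Hc := exp_convex (1 / p) (p * ln a) (q * ln b) Hl).
  replace (1 - 1 / p) with (1 / q) in Hc by lra.
  replace (1 / p * (p * ln a) + 1 / q * (q * ln b)) with (ln a + ln b) in Hc by (field; lra).
  rewrite exp_plus, !exp_ln in Hc by auto. lra.
Qed.
(** * Finite sums, Hoelder and Cauchy-Schwarz *)

Definition lsum {A : Type} (l : list A) (f : A -> R) : R :=
  fold_right (fun k acc => f k + acc) 0 l.

Lemma lsum_cons {A} a l (f : A -> R) : lsum (a :: l) f = f a + lsum l f.
Proof. reflexivity. Qed.

Lemma lsum_app {A} l1 l2 (f : A -> R) : lsum (l1 ++ l2) f = lsum l1 f + lsum l2 f.
Proof. induction l1 as [|a l1 IH]; simpl; [ring|]. unfold lsum in *; simpl. rewrite IH. ring. Qed.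

Lemma lsum_map {A B} (g : A -> B) l (f : B -> R) : lsum (map g l) f = lsum l (fun a => f (g a)).
Proof. induction l as [|a l IH]; simpl; auto. unfold lsum in *; simpl. now rewrite IH. Qed.

Lemma lsum_le {A} l (f g : A -> R) : (forall a, In a l -> f a <= g a) -> lsum l f <= lsum l g.
Proof.
  induction l as [|a l IH]; intros H; simpl; [lra|]. unfold lsum in *; simpl.
  apply Rplus_le_compat; [apply H; simpl; auto|]. apply IH. intros; apply H; simpl; auto.
Qed.

Lemma lsum_ext {A} l (f g : A -> R) : (forall a, In a l -> f a = g a) -> lsum l f = lsum l g.
Proof. intros H. apply Rle_antisym; apply lsum_le; intros a Ha; rewrite H; auto; lra. Qed.

Lemma lsum_plus {A} l (f g : A -> R) : lsum l (fun a => f a + g a) = lsum l f + lsum l g.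
Proof.
  induction l as [|a l IH]; simpl; [unfold lsum; simpl; ring|].
  unfold lsum in *; simpl. rewrite IH. ring.
Qed.

Lemma lsum_scal {A} l c (f : A -> R) : lsum l (fun a => c * f a) = c * lsum l f.
Proof.
  induction l as [|a l IH]; simpl; [unfold lsum; simpl; ring|].
  unfold lsum in *; simpl. rewrite IH. ring.
Qed.

Lemma lsum_opp {A} l (f : A -> R) : lsum l (fun a => - f a) = - lsum l f.
Proof.
  induction l as [|a l IH]; simpl; [unfold lsum; simpl; ring|].
  unfold lsum in *; simpl. rewrite IH. ring.
Qed.

Lemma lsum_const {A} (l : list A) c : lsum l (fun _ => c) = INR (length l) * c.
Proof.
  induction l as [|a l IH]; [unfold lsum; simpl; ring|].
  rewrite lsum_cons, IH. simpl length. rewrite S_INR. ring.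
Qed.

Lemma lsum_const0 {A} (l : list A) : lsum l (fun _ => 0) = 0.
Proof. rewrite lsum_const. ring. Qed.

Lemma lsum_nonneg {A} l (f : A -> R) : (forall a, In a l -> 0 <= f a) -> 0 <= lsum l f.
Proof. intros H. rewrite <- (lsum_const0 l). now apply lsum_le. Qed.

Lemma lsum_abs {A} l (f : A -> R) : Rabs (lsum l f) <= lsum l (fun a => Rabs (f a)).
Proof.
  induction l as [|a l IH]; simpl; unfold lsum in *; simpl; [rewrite Rabs_R0; lra|].
  eapply Rle_trans; [apply Rabs_triang|lra].
Qed.

Lemma lsum_perm {A} l1 l2 (f : A -> R) : Permutation l1 l2 -> lsum l1 f = lsum l2 f.
Proof. intros H; induction H; unfold lsum in *; simpl; lra. Qed.

Lemma lsum_swap {A B} (l1 : list A) (l2 : list B) f :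
  lsum l1 (fun i => lsum l2 (fun s => f i s)) = lsum l2 (fun s => lsum l1 (fun i => f i s)).
Proof.
  induction l1 as [|a l1 IH]; [now rewrite lsum_const0|].
  rewrite lsum_cons, IH, <- lsum_plus. apply lsum_ext; intros; now rewrite lsum_cons.
Qed.

Lemma lsum_eq0_nonneg {A} l (f : A -> R) : (forall a, In a l -> 0 <= f a) -> lsum l f = 0 ->
  forall a, In a l -> f a = 0.
Proof.
  induction l as [|b l IH]; intros H H0 a Ha; [contradiction|].
  rewrite lsum_cons in H0.
  assert (0 <= f b) by (apply H; simpl; auto).
  assert (0 <= lsum l f) by (apply lsum_nonneg; intros; apply H; simpl; auto).
  destruct Ha as [<- | Ha]; [lra|]. apply IH; auto; [intros; apply H; simpl; auto | lra].
Qed.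

Lemma sumN_lsum m n f : sumN m n f = lsum (seq m n) f.
Proof. reflexivity. Qed.

Lemma lsum_mul_eq0_of_rpow {A} l (x y : A -> R) p : (forall a, 0 <= x a) ->
  lsum l (fun a => rpow (x a) p) = 0 -> lsum l (fun a => x a * y a) = 0.
Proof.
  intros Hx H0. rewrite <- (lsum_const0 l). apply lsum_ext. intros a Ha.
  assert (Hxa : rpow (x a) p = 0)
    by (apply (lsum_eq0_nonneg l (fun a => rpow (x a) p)); auto; intros; apply rpow_ge0).
  apply rpow_eq0 in Hxa; auto. rewrite Hxa; ring.
Qed.

Lemma holder {A} (l : list A) (x y : A -> R) (p q : R) :
  (forall a, 0 <= x a) -> (forall a, 0 <= y a) -> 1 < p -> 1 < q -> 1 / p + 1 / q = 1 ->
  lsum l (fun a => x a * y a) <=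
  rpow (lsum l (fun a => rpow (x a) p)) (1 / p) * rpow (lsum l (fun a => rpow (y a) q)) (1 / q).
Proof.
  intros Hx Hy Hp Hq Hpq.
  set (X := lsum l (fun a => rpow (x a) p)). set (Y := lsum l (fun a => rpow (y a) q)).
  assert (HX : 0 <= X) by (apply lsum_nonneg; intros; apply rpow_ge0).
  assert (HY : 0 <= Y) by (apply lsum_nonneg; intros; apply rpow_ge0).
  assert (0 <= rpow X (1 / p) * rpow Y (1 / q)) by (apply Rmult_le_pos; apply rpow_ge0).
  destruct (Rle_lt_or_eq_dec _ _ HX) as [HX' | HX'].
  2:{ rewrite (lsum_mul_eq0_of_rpow l x y p); auto. }
  destruct (Rle_lt_or_eq_dec _ _ HY) as [HY' | HY'].
  2:{ rewrite (lsum_ext l _ (fun a => y a * x a)) by (intros; ring).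
      rewrite (lsum_mul_eq0_of_rpow l y x q); auto. }
  set (al := rpow X (1 / p)). set (be := rpow Y (1 / q)).
  assert (Hal : 0 < al) by (apply rpow_gt0; auto).
  assert (Hbe : 0 < be) by (apply rpow_gt0; auto).
  assert (Hal2 : rpow al p = X) by (apply rpow_rpow_inv; auto; lra).
  assert (Hbe2 : rpow be q = Y) by (apply rpow_rpow_inv; auto; lra).
  (* Young's inequality for [x a / al] and [y a / be], summed over [l] *)
  apply Rle_trans with
    (lsum l (fun a => al * be * (rpow (x a) p / X / p + rpow (y a) q / Y / q))).
  - apply lsum_le. intros a _.
    assert (Hyoung := young (x a / al) (y a / be) p q ltac:(apply Rdiv_le_0_compat; auto)
       ltac:(apply Rdiv_le_0_compat; auto) Hp Hq Hpq).
    rewrite !rpow_div, Hal2, Hbe2 in Hyoung by auto.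
    replace (x a * y a) with (al * be * (x a / al * (y a / be))) by (field; lra).
    apply Rmult_le_compat_l; nra.
  - rewrite lsum_scal, lsum_plus.
    unfold Rdiv.
    rewrite (lsum_ext l (fun a => rpow (x a) p * / X * / p) (fun a => (/ X * / p) * rpow (x a) p))
      by (intros; ring).
    rewrite (lsum_ext l (fun a => rpow (y a) q * / Y * / q) (fun a => (/ Y * / q) * rpow (y a) q))
      by (intros; ring).
    rewrite !lsum_scal. fold X Y.
    replace (/ X * / p * X + / Y * / q * Y) with (1 / p + 1 / q) by (field; lra).
    rewrite Hpq. lra.
Qed.

Lemma cauchy_schwarz {A} (l : list A) (x y : A -> R) :
  (forall a, 0 <= x a) -> (forall a, 0 <= y a) ->
  lsum l (fun a => x a * y a) <= sqrt (lsum l (fun a => x a ^ 2)) * sqrt (lsum l (fun a => y a ^ 2)).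
Proof.
  intros Hx Hy. eapply Rle_trans; [apply (holder l x y 2 2); auto; lra|].
  rewrite !(lsum_ext l (fun a => rpow _ 2) (fun a => _ ^ 2)) by (intros; apply rpow_2; auto).
  rewrite !rpow_half; [lra | |]; apply lsum_nonneg; intros; apply pow2_ge_0.
Qed.

(** * Rademacher sums and Hoeffding's inequality *)

Definition ind {A : Type} (E : A -> Prop) (e : A) : R :=
  if excluded_middle_informative (E e) then 1 else 0.

Lemma ind_ge0 {A} (E : A -> Prop) e : 0 <= ind E e.
Proof. unfold ind. destruct excluded_middle_informative; lra. Qed.

Lemma ind_le1 {A} (E : A -> Prop) e : ind E e <= 1.
Proof. unfold ind. destruct excluded_middle_informative; lra. Qed.

Lemma ind_true {A} (E : A -> Prop) e : E e -> ind E e = 1.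
Proof. unfold ind. destruct excluded_middle_informative; tauto. Qed.

Lemma ind_false {A} (E : A -> Prop) e : ~ E e -> ind E e = 0.
Proof. unfold ind. destruct excluded_middle_informative; tauto. Qed.

Lemma ind_01 {A} (E : A -> Prop) e : ind E e = 0 \/ ind E e = 1.
Proof. unfold ind. destruct excluded_middle_informative; auto. Qed.

Lemma ind_mono {A} (E1 E2 : A -> Prop) e : (E1 e -> E2 e) -> ind E1 e <= ind E2 e.
Proof. unfold ind. do 2 destruct excluded_middle_informative; try lra. tauto. Qed.

Lemma ind_or {A} (E1 E2 : A -> Prop) e : ind (fun e => E1 e \/ E2 e) e <= ind E1 e + ind E2 e.
Proof. unfold ind. repeat destruct excluded_middle_informative; try lra. tauto. Qed.

Lemma ind_compl {A} (E : A -> Prop) e : ind E e + ind (fun e => ~ E e) e = 1.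
Proof. unfold ind. repeat destruct excluded_middle_informative; try lra; tauto. Qed.

Lemma prob_lsum N E : prob N E = lsum (all_signs N) (ind E) / 2 ^ N.
Proof. reflexivity. Qed.

Lemma lsum_all_signs_1 N : lsum (all_signs N) (fun _ => 1) = 2 ^ N.
Proof.
  induction N as [|N IH]; simpl; [unfold lsum; simpl; ring|].
  rewrite lsum_app, !lsum_map, IH. ring.
Qed.

Lemma prob_mono N (E1 E2 : list bool -> Prop) :
  (forall e, E1 e -> E2 e) -> prob N E1 <= prob N E2.
Proof.
  intros H. rewrite !prob_lsum. apply Rmult_le_compat_r.
  - apply Rlt_le, Rinv_0_lt_compat, pow_lt; lra.
  - apply lsum_le. intros; apply ind_mono; auto.
Qed.

Lemma prob_or N (E1 E2 : list bool -> Prop) :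
  prob N (fun e => E1 e \/ E2 e) <= prob N E1 + prob N E2.
Proof.
  rewrite !prob_lsum. unfold Rdiv. rewrite <- Rmult_plus_distr_r, <- lsum_plus.
  apply Rmult_le_compat_r; [apply Rlt_le, Rinv_0_lt_compat, pow_lt; lra|].
  apply lsum_le. intros; apply ind_or.
Qed.

Lemma prob_compl N (E : list bool -> Prop) : prob N E + prob N (fun e => ~ E e) = 1.
Proof.
  rewrite !prob_lsum. unfold Rdiv. rewrite <- Rmult_plus_distr_r, <- lsum_plus.
  rewrite (lsum_ext _ _ (fun _ => 1)) by (intros; apply ind_compl).
  rewrite lsum_all_signs_1. field. apply pow_nonzero. lra.
Qed.

Lemma prob_empty N (E : list bool -> Prop) : (forall e, ~ E e) -> prob N E = 0.
Proof.
  intros H. rewrite prob_lsum, (lsum_ext _ _ (fun _ => 0)), lsum_const0; [unfold Rdiv; ring|].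
  intros; apply ind_false; auto.
Qed.

Lemma prob_union_list {A} N (L : list A) (P : A -> list bool -> Prop) :
  prob N (fun e => exists a, In a L /\ P a e) <= lsum L (fun a => prob N (P a)).
Proof.
  induction L as [|a L IH].
  - rewrite prob_empty; [unfold lsum; simpl; lra|]. intros e [a [[] _]].
  - rewrite lsum_cons. eapply Rle_trans; [|apply Rplus_le_compat_l, IH].
    eapply Rle_trans; [|apply prob_or]. apply prob_mono.
    intros e [b [[<- | Hb] Hp]]; [left; auto | right; eauto].
Qed.

(* The sample space is finite, so a countable union only involves finitely many events. *)
Lemma prob_union_nat N (B : nat -> list bool -> Prop) K :
  (forall M, lsum (seq 0 M) (fun n => prob N (B n)) <= K) ->
  prob N (fun e => exists n, B n e) <= K.
Proof.
  intros H.
  assert (Hfin : forall l : list (list bool), exists M,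
            forall e, In e l -> (exists n, B n e) -> exists n, (n < M)%nat /\ B n e).
  { induction l as [|e0 l [M HM]]; [exists 0%nat; intros e []|].
    destruct (classic (exists n, B n e0)) as [[n0 Hn0] | Hn].
    - exists (Nat.max M (S n0)). intros e [<- | He] Hx; [exists n0; split; auto; lia|].
      destruct (HM e He Hx) as [n [Hn1 Hn2]]. exists n; split; auto; lia.
    - exists M. intros e [<- | He] Hx; [contradiction | auto]. }
  destruct (Hfin (all_signs N)) as [M HM].
  eapply Rle_trans; [|apply (H M)].
  eapply Rle_trans; [|apply prob_union_list].
  rewrite !prob_lsum. apply Rmult_le_compat_r; [apply Rlt_le, Rinv_0_lt_compat, pow_lt; lra|].
  apply lsum_le. intros e He. apply ind_mono. intros Hx.
  destruct (HM e He Hx) as [n [Hn Hb]]. exists n. split; auto. apply in_seq; lia.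
Qed.

Definition rademacher_sum (e : list bool) N (a : nat -> R) : R := sumN 0 N (fun i => sgn e i * a i).

Lemma rademacher_mgf N (a : nat -> R) (th : R) :
  lsum (all_signs N) (fun e => exp (th * rademacher_sum e N a))
  <= 2 ^ N * exp (th ^ 2 / 2 * sumN 0 N (fun i => a i ^ 2)).
Proof.
  unfold rademacher_sum. revert a. induction N as [|N IH]; intros a.
  - unfold lsum, sumN; simpl. rewrite !Rmult_0_r, exp_0. lra.
  - assert (Hshift : forall f, sumN 0 (S N) f = f 0%nat + sumN 0 N (fun i => f (S i))).
    { intros f. rewrite !sumN_lsum. change (seq 0 (S N)) with (0%nat :: seq 1 N).
      now rewrite lsum_cons, <- seq_shift, lsum_map. }
    simpl all_signs. rewrite lsum_app, !lsum_map.
    set (rest := fun e => exp (th * sumN 0 N (fun i => sgn e i * a (S i)))).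
    assert (Hsplit : forall b : bool, lsum (all_signs N)
              (fun e => exp (th * sumN 0 (S N) (fun i => sgn (b :: e) i * a i)))
              = exp (th * (if b then 1 else -1) * a 0%nat) * lsum (all_signs N) rest).
    { intros b. rewrite <- lsum_scal. apply lsum_ext. intros e _.
      unfold rest. rewrite Hshift, <- exp_plus. f_equal. unfold sgn; simpl. ring. }
    rewrite !Hsplit.
    replace (th * -1 * a 0%nat) with (- (th * a 0%nat)) by ring. rewrite Rmult_1_r.
    rewrite <- Rmult_plus_distr_r, Hshift, Rmult_plus_distr_l, exp_plus.
    assert (0 <= lsum (all_signs N) rest) by (apply lsum_nonneg; intros; apply Rlt_le, exp_pos).
    assert (Hc := cosh_le_exp_sq_half (th * a 0%nat)).
    replace ((th * a 0%nat) ^ 2 / 2) with (th ^ 2 / 2 * a 0%nat ^ 2) in Hc by field.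
    specialize (IH (fun i => a (S i))). fold rest in IH. change (2 ^ S N) with (2 * 2 ^ N).
    apply Rle_trans with (2 * exp (th ^ 2 / 2 * a 0%nat ^ 2) *
      (2 ^ N * exp (th ^ 2 / 2 * sumN 0 N (fun i => a (S i) ^ 2)))); [|right; ring].
    apply Rmult_le_compat; auto; [|lra].
    apply Rplus_le_le_0_compat; apply Rlt_le, exp_pos.
Qed.

Lemma hoeffding_upper N a lam : 0 <= lam -> 0 < sumN 0 N (fun i => a i ^ 2) ->
  prob N (fun e => lam < rademacher_sum e N a) <=
  exp (- (lam ^ 2 / (2 * sumN 0 N (fun i => a i ^ 2)))).
Proof.
  intros Hl Hs. set (s2 := sumN 0 N (fun i => a i ^ 2)) in *.
  assert (H2N : 0 < 2 ^ N) by (apply pow_lt; lra).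
  rewrite prob_lsum. apply Rle_div_l; auto.
  (* Chernoff bound with the optimal parameter [lam / s2] *)
  set (th := lam / s2). assert (Hth : 0 <= th) by (apply Rdiv_le_0_compat; auto).
  apply Rle_trans with
    (lsum (all_signs N) (fun e => exp (- (th * lam)) * exp (th * rademacher_sum e N a))).
  - apply lsum_le. intros e _. rewrite <- exp_plus. unfold ind.
    destruct excluded_middle_informative.
    + rewrite <- exp_0 at 1. apply exp_le_mono. nra.
    + apply Rlt_le, exp_pos.
  - rewrite lsum_scal. eapply Rle_trans.
    { apply Rmult_le_compat_l; [apply Rlt_le, exp_pos | apply rademacher_mgf]. }
    fold s2. rewrite Rmult_comm, Rmult_assoc, <- exp_plus, Rmult_comm.
    apply Rmult_le_compat_r; [lra|]. apply exp_le_mono. unfold th. right. field. lra.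
Qed.

Lemma hoeffding N a tau K : 0 <= tau -> sqrt (sumN 0 N (fun i => a i ^ 2)) <= K ->
  prob N (fun e => tau * K < Rabs (rademacher_sum e N a)) <= 2 * exp (- (tau ^ 2 / 2)).
Proof.
  intros Ht HK. set (s2 := sumN 0 N (fun i => a i ^ 2)) in *.
  assert (Hs2 : 0 <= s2) by (apply lsum_nonneg; intros; apply pow2_ge_0).
  assert (0 < exp (- (tau ^ 2 / 2))) by apply exp_pos.
  destruct (Rle_lt_or_eq_dec _ _ Hs2) as [Hpos | Hzero].
  - assert (Hside : forall b, sumN 0 N (fun i => b i ^ 2) = s2 ->
              prob N (fun e => tau * sqrt s2 < rademacher_sum e N b) <= exp (- (tau ^ 2 / 2))).
    { intros b Hb. eapply Rle_trans.
      - apply hoeffding_upper; [apply Rmult_le_pos; auto; apply sqrt_pos | rewrite Hb; lra].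
      - rewrite Hb, Rpow_mult_distr, pow2_sqrt by lra. right. f_equal. field. lra. }
    assert (Hneg : forall e, rademacher_sum e N (fun i => - a i) = - rademacher_sum e N a).
    { intros e. unfold rademacher_sum. rewrite !sumN_lsum, <- lsum_opp. apply lsum_ext; intros; ring. }
    assert (Hsq : sumN 0 N (fun i => (- a i) ^ 2) = s2)
      by (unfold s2; rewrite !sumN_lsum; apply lsum_ext; intros; ring).
    assert (tau * sqrt s2 <= tau * K) by (apply Rmult_le_compat_l; auto).
    eapply Rle_trans; [apply (prob_mono N _ (fun e => tau * sqrt s2 < rademacher_sum e N a \/
                         tau * sqrt s2 < rademacher_sum e N (fun i => - a i)))|].
    + intros e He. rewrite Hneg. unfold Rabs in He. destruct Rcase_abs; [right|left]; lra.
    + eapply Rle_trans; [apply prob_or|]. pose proof (Hside a eq_refl). pose proof (Hside _ Hsq). lra.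
  - rewrite prob_empty; [lra|]. intros e He.
    assert (Ha : forall i, In i (seq 0 N) -> a i = 0).
    { intros i Hi. enough (a i ^ 2 = 0) by nra.
      apply (lsum_eq0_nonneg (seq 0 N) (fun i => a i ^ 2)); auto. intros; apply pow2_ge_0. }
    assert (Hsum : rademacher_sum e N a = 0).
    { unfold rademacher_sum. rewrite sumN_lsum, <- (lsum_const0 (seq 0 N)).
      apply lsum_ext. intros i Hi. rewrite Ha; auto; ring. }
    rewrite Hsum, Rabs_R0 in He. rewrite <- Hzero, sqrt_0 in HK.
    assert (0 <= tau * K) by (apply Rmult_le_pos; lra). lra.
Qed.

(** * Nonincreasing rearrangements *)

Lemma insert_desc_perm a l : Permutation (a :: l) (insert_desc a l).
Proof.
  induction l as [|b l IH]; simpl; auto. destruct Rle_dec; auto.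
  eapply perm_trans; [apply perm_swap | auto].
Qed.

Lemma sort_desc_perm l : Permutation l (sort_desc l).
Proof.
  induction l as [|a l IH]; simpl; auto.
  eapply perm_trans; [apply perm_skip, IH | apply insert_desc_perm].
Qed.

Lemma insert_desc_sorted a l : StronglySorted Rge l -> StronglySorted Rge (insert_desc a l).
Proof.
  induction l as [|b l IH]; intros H; simpl; [repeat constructor|].
  apply StronglySorted_inv in H as [H1 H2]. destruct Rle_dec.
  - constructor; [constructor; auto|]. constructor; [lra|].
    eapply Forall_impl; [|exact H2]. intros; lra.
  - constructor; auto. apply Forall_forall. intros x Hx.
    apply (Permutation_in _ (Permutation_sym (insert_desc_perm a l))) in Hx.
    rewrite Forall_forall in H2. destruct Hx as [<- | Hx]; [lra | auto].
Qed.

Lemma sort_desc_sorted l : StronglySorted Rge (sort_desc l).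
Proof. induction l; simpl; [constructor | now apply insert_desc_sorted]. Qed.

Lemma StronglySorted_app_rel {A} (Rl : A -> A -> Prop) l1 l2 : StronglySorted Rl (l1 ++ l2) ->
  forall x y, In x l1 -> In y l2 -> Rl x y.
Proof.
  induction l1 as [|a l1 IH]; simpl; intros H x y Hx Hy; [contradiction|].
  apply StronglySorted_inv in H as [H1 H2]. destruct Hx as [<- | Hx]; eauto.
  rewrite Forall_forall in H2. apply H2, in_or_app; auto.
Qed.

(* [idx] lists the coordinates [0..N-1] of [x] by nonincreasing modulus, so that
   [rearr N x (k+1) = |x (nth k idx)|]. *)
Definition sorting_perm (N : nat) (x : vec) (idx : list nat) : Prop :=
  Permutation (seq 0 N) idx /\
  sort_desc (map (fun i => Rabs (x i)) (seq 0 N)) = map (fun i => Rabs (x i)) idx.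

Lemma sorting_perm_exists N (x : vec) : exists idx, sorting_perm N x idx.
Proof.
  destruct (Permutation_map_inv _ _
             (Permutation_sym (sort_desc_perm (map (fun i => Rabs (x i)) (seq 0 N)))))
    as [idx [H1 H2]].
  exists idx. split; auto.
Qed.

Lemma sorting_perm_length N x idx : sorting_perm N x idx -> length idx = N.
Proof. intros [Hp _]. now rewrite <- (Permutation_length Hp), length_seq. Qed.

Lemma lsum_seq_nth (l : list R) G : forall n a, (a + n <= length l)%nat ->
  lsum (seq a n) (fun k => G (nth k l 0)) = lsum (firstn n (skipn a l)) G.
Proof.
  induction n as [|n IH]; intros a H; auto.
  assert (Hskip : skipn a l = nth a l 0 :: skipn (S a) l).
  { clear - H. revert a H. induction l as [|b l IHl]; intros [|a] H; simpl in *; try lia; auto.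
    apply IHl. lia. }
  change (seq a (S n)) with (a :: seq (S a) n).
  rewrite Hskip. simpl firstn. rewrite !lsum_cons, IH by lia. auto.
Qed.

Lemma sumI_rearr N (x : vec) idx G m n : sorting_perm N x idx -> (m + n <= N)%nat ->
  sumI (S m) (m + n) (fun k => G (rearr N x k)) =
  lsum (firstn n (skipn m idx)) (fun i => G (Rabs (x i))).
Proof.
  intros Hx Hmn. assert (HL := sorting_perm_length N x idx Hx). destruct Hx as [_ Hs].
  unfold sumI, rearr. rewrite Hs.
  change (fold_right ?f 0 ?l) with (lsum l (fun k => G (nth (k - 1) (map (fun i => Rabs (x i)) idx) 0))).
  replace (S (m + n) - S m)%nat with n by lia. rewrite <- seq_shift, lsum_map.
  rewrite (lsum_ext _ _ (fun k => G (nth k (map (fun i => Rabs (x i)) idx) 0)))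
    by (intros; do 3 f_equal; lia).
  rewrite lsum_seq_nth by (rewrite length_map; lia).
  now rewrite skipn_map, firstn_map, lsum_map.
Qed.

Lemma sumI_rearr_head N (x : vec) idx G m : sorting_perm N x idx -> (m <= N)%nat ->
  sumI 1 m (fun k => G (rearr N x k)) = lsum (firstn m idx) (fun i => G (Rabs (x i))).
Proof. intros Hx Hm. exact (sumI_rearr N x idx G 0 m Hx Hm). Qed.

Lemma sumI_rearr_tail N (x : vec) idx G m : sorting_perm N x idx -> (m <= N)%nat ->
  sumI (S m) N (fun k => G (rearr N x k)) = lsum (skipn m idx) (fun i => G (Rabs (x i))).
Proof.
  intros Hx Hm. assert (HL := sorting_perm_length N x idx Hx).
  replace N with (m + (N - m))%nat at 1 by lia.
  rewrite (sumI_rearr N x idx G m (N - m) Hx) by lia.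
  rewrite firstn_all2; auto. rewrite length_skipn. lia.
Qed.

Lemma sorting_perm_head_ge_tail N (x : vec) idx m : sorting_perm N x idx ->
  forall h i, In h (firstn m idx) -> In i (skipn m idx) -> Rabs (x i) <= Rabs (x h).
Proof.
  intros [_ Hs] h i Hh Hi. assert (H := sort_desc_sorted (map (fun i => Rabs (x i)) (seq 0 N))).
  rewrite Hs, <- (firstn_skipn m idx), map_app in H.
  enough (Rabs (x h) >= Rabs (x i)) by lra.
  eapply (StronglySorted_app_rel _ _ _ H); apply (in_map (fun i => Rabs (x i))); auto.
Qed.

Lemma lsum_ind_partition N l1 l2 (g : nat -> R) : Permutation (seq 0 N) (l1 ++ l2) ->
  lsum (seq 0 N) (fun i => ind (fun i => In i l1) i * g i) = lsum l1 g.
Proof.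
  intros Hp. rewrite (lsum_perm _ _ _ Hp), lsum_app.
  assert (ND : NoDup (l1 ++ l2)) by (eapply Permutation_NoDup; [exact Hp | apply seq_NoDup]).
  rewrite (lsum_ext l1 _ g), (lsum_ext l2 _ (fun _ => 0)), lsum_const0; [ring | |].
  - intros a Ha. rewrite ind_false; [ring|]. intros Ha1.
    destruct (in_split _ _ Ha) as [x [y ->]]. rewrite app_assoc in ND.
    apply NoDup_remove_2 in ND. apply ND, in_or_app. left. apply in_or_app. auto.
  - intros a Ha. rewrite ind_true; auto. ring.
Qed.

Lemma lsum_ind_le_dominated (T : nat -> Prop) (g : nat -> R) : (forall a, 0 <= g a) ->
  forall A B, (length A <= length B)%nat ->
  (forall a b, In a A -> T a -> In b B -> g a <= g b) ->
  lsum A (fun a => ind T a * g a) <= lsum B g.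
Proof.
  intros Hg A. induction A as [|a A IH]; intros B HL H; [apply lsum_nonneg; auto|].
  destruct B as [|b B]; [simpl in HL; lia|]. rewrite !lsum_cons. apply Rplus_le_compat.
  - unfold ind. destruct excluded_middle_informative.
    + rewrite Rmult_1_l. apply H; simpl; auto.
    + rewrite Rmult_0_l; auto.
  - apply IH; [simpl in HL; lia|]. intros; apply H; simpl; auto.
Qed.

Lemma sumI_antimono a b N f : (a <= b)%nat -> (b <= S N)%nat -> (forall k, 0 <= f k) ->
  sumI b N f <= sumI a N f.
Proof.
  intros Hab Hb Hf. unfold sumI.
  change (lsum (seq b (S N - b)) f <= lsum (seq a (S N - a)) f).
  replace (S N - a)%nat with ((b - a) + (S N - b))%nat by lia.
  rewrite seq_app, lsum_app. replace (a + (b - a))%nat with b by lia.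
  assert (0 <= lsum (seq a (b - a)) f) by (apply lsum_nonneg; auto). lra.
Qed.

(** * Deviation on a single vector *)

Definition head_l2 (N : nat) (x : vec) (k : nat) : R :=
  sqrt (sumI 1 (k - 1) (fun i => rearr N x i ^ 2)).

Definition tail_lp (N : nat) (x : vec) (p : R) (k : nat) : R :=
  rpow (sumI k N (fun i => rpow (rearr N x i) p)) (1 / p).

Lemma l2norm_abs N (z : vec) : sqrt (lsum (seq 0 N) (fun i => Rabs (z i) ^ 2)) = l2norm N z.
Proof. unfold l2norm. f_equal. rewrite sumN_lsum. apply lsum_ext; intros; apply pow2_abs. Qed.

Lemma Rabs_sgn e i : Rabs (sgn e i) = 1.
Proof. unfold sgn, Rabs. destruct nth; destruct Rcase_abs; lra. Qed.

(* Off [H], [rpow ((1 - ind H i) * x i ^ 2) p] is [|x i| ^ (2 p)]; on [H] it vanishes. *)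
Lemma lsum_rpow_off_head_le N (x : vec) idx m (H : nat -> Prop) p :
  sorting_perm N x idx -> (m <= N)%nat -> (forall i, In i (firstn m idx) -> H i) ->
  lsum (seq 0 N) (fun i => rpow ((1 - ind H i) * x i ^ 2) p) <=
  sumI (S m) N (fun i => rpow (rearr N x i) (2 * p)).
Proof.
  intros Hx Hm HH. rewrite (sumI_rearr_tail N x idx (fun t => rpow t (2 * p)) m Hx Hm).
  assert (Hsplit : Permutation (seq 0 N) (skipn m idx ++ firstn m idx)).
  { eapply perm_trans; [apply (proj1 Hx)|].
    rewrite <- (firstn_skipn m idx) at 1. apply Permutation_app_comm. }
  rewrite <- (lsum_ind_partition N _ _ _ Hsplit). apply lsum_le. intros i Hi.
  destruct (classic (H i)) as [Hh | Hh].
  - rewrite ind_true by auto. replace ((1 - 1) * x i ^ 2) with 0 by ring.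
    rewrite rpow_0. apply Rmult_le_pos; [apply ind_ge0 | apply rpow_ge0].
  - rewrite (ind_false H) by auto. replace ((1 - 0) * x i ^ 2) with (x i ^ 2) by ring.
    rewrite rpow_abs_double, ind_true; [lra|].
    apply (Permutation_in _ Hsplit), in_app_or in Hi. destruct Hi as [Hi | Hi]; auto.
    exfalso; auto.
Qed.

Lemma cauchy_schwarz_restricted N (z u : vec) (w : nat -> R) l l' A :
  (forall i, w i = 0 \/ w i = 1) -> Permutation (seq 0 N) (l ++ l') ->
  sqrt (lsum l (fun i => w i * u i ^ 2)) <= A ->
  lsum (seq 0 N) (fun i => Rabs (z i) * (ind (fun i => In i l) i * w i * Rabs (u i)))
  <= l2norm N z * A.
Proof.
  intros Hw Hp Hl. eapply Rle_trans.
  { apply cauchy_schwarz; intros i; [apply Rabs_pos|].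
    repeat apply Rmult_le_pos; [apply ind_ge0 | destruct (Hw i) as [-> | ->]; lra | apply Rabs_pos]. }
  cbv beta. rewrite l2norm_abs. apply Rmult_le_compat_l; [apply sqrt_pos|].
  rewrite <- (lsum_ind_partition N l l' _ Hp) in Hl. erewrite lsum_ext; [exact Hl|].
  intros i _. rewrite !Rpow_mult_distr, pow2_abs.
  destruct (Hw i) as [-> | ->], (ind_01 (fun i => In i l) i) as [-> | ->]; ring.
Qed.

Section HeadTailSplit.

Variables (N m : nat) (z u : vec) (iz iu : list nat).
Hypotheses (Hz : sorting_perm N z iz) (Hu : sorting_perm N u iu) (Hm : (m <= N)%nat).

Let head i := In i (firstn m iz) \/ In i (firstn m iu).

Lemma head_sum_le A : sqrt (sumI 1 m (fun i => rearr N u i ^ 2)) <= A ->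
  forall e, Rabs (lsum (seq 0 N) (fun i => sgn e i * (ind head i * z i * u i))) <= 2 * l2norm N z * A.
Proof.
  intros HA e.
  set (hz := fun i => In i (firstn m iz)). set (hu := fun i => In i (firstn m iu)).
  set (tu := fun i => In i (skipn m iu)).
  assert (Pu : Permutation (seq 0 N) (firstn m iu ++ skipn m iu))
    by (rewrite firstn_skipn; apply Hu).
  assert (Pz : Permutation (seq 0 N) (firstn m iz ++ skipn m iz))
    by (rewrite firstn_skipn; apply Hz).
  assert (HuA : sqrt (lsum (firstn m iu) (fun i => u i ^ 2)) <= A).
  { rewrite (sumI_rearr_head N u iu (fun t => t ^ 2) m Hu Hm) in HA.
    erewrite lsum_ext; [exact HA|]. intros; symmetry; apply pow2_abs. }
  (* Off the head of [u], [|u|] is dominated by its values on the head of [u]. *)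
  assert (HzuA : sqrt (lsum (firstn m iz) (fun i => ind tu i * u i ^ 2)) <= A).
  { eapply Rle_trans; [|exact HuA]. apply sqrt_le_1_alt, lsum_ind_le_dominated.
    - intros; apply pow2_ge_0.
    - rewrite !length_firstn, (sorting_perm_length _ _ _ Hz), (sorting_perm_length _ _ _ Hu). lia.
    - intros x y _ Hxt Hy. rewrite <- (pow2_abs (u x)), <- (pow2_abs (u y)).
      apply pow_incr. split; [apply Rabs_pos|].
      exact (sorting_perm_head_ge_tail N u iu m Hu y x Hy Hxt). }
  assert (Hind : forall i, In i (seq 0 N) -> ind head i <= ind hu i + ind hz i * ind tu i).
  { intros i Hi. assert (0 <= ind hu i) by apply ind_ge0.
    assert (0 <= ind hz i * ind tu i) by (apply Rmult_le_pos; apply ind_ge0).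
    unfold ind at 1.
    destruct excluded_middle_informative as [[Hiz | Hiu] | Hh]; [|rewrite ind_true by auto|]; try lra.
    destruct (classic (hu i)) as [Hiu | Hiu]; [rewrite ind_true by auto; lra|].
    rewrite (ind_true hz), (ind_true tu); auto; [lra|].
    apply (Permutation_in _ Pu), in_app_or in Hi. tauto. }
  assert (Hhu : lsum (seq 0 N) (fun i => Rabs (z i) * (ind hu i * 1 * Rabs (u i))) <= l2norm N z * A).
  { apply (cauchy_schwarz_restricted N z u (fun _ => 1) _ _ A ltac:(auto) Pu).
    rewrite (lsum_ext _ _ (fun i => u i ^ 2)); [exact HuA | intros; ring]. }
  assert (Htu : lsum (seq 0 N) (fun i => Rabs (z i) * (ind hz i * ind tu i * Rabs (u i)))
                <= l2norm N z * A)
    by exact (cauchy_schwarz_restricted N z u (ind tu) _ _ A (ind_01 tu) Pz HzuA).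
  enough (Rabs (lsum (seq 0 N) (fun i => sgn e i * (ind head i * z i * u i))) <=
          lsum (seq 0 N) (fun i => Rabs (z i) * (ind hu i * 1 * Rabs (u i))) +
          lsum (seq 0 N) (fun i => Rabs (z i) * (ind hz i * ind tu i * Rabs (u i)))) by lra.
  eapply Rle_trans; [apply lsum_abs|].
  rewrite <- lsum_plus. apply lsum_le. intros i Hi.
  rewrite !Rabs_mult, Rabs_sgn, (Rabs_pos_eq (ind head i)) by apply ind_ge0.
  assert (0 <= Rabs (z i) * Rabs (u i)) by (apply Rmult_le_pos; apply Rabs_pos).
  specialize (Hind i Hi). fold hu hz. nra.
Qed.

Lemma tail_l2_le r r' B : 1 < r -> 1 < r' -> 1 / r + 1 / r' = 1 ->
  tail_lp N u (2 * r') (S m) <= B ->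
  sqrt (sumN 0 N (fun i => ((1 - ind head i) * z i * u i) ^ 2)) <= B * tail_lp N z (2 * r) (S m).
Proof.
  intros Hr Hr' Hrr HB.
  set (tail := fun (x : vec) i => (1 - ind head i) * x i ^ 2).
  assert (Htail0 : forall x i, 0 <= tail x i).
  { intros x i. apply Rmult_le_pos; [pose proof (ind_le1 head i); lra | apply pow2_ge_0]. }
  rewrite sumN_lsum, (lsum_ext _ _ (fun i => tail z i * tail u i)).
  2:{ intros i _. unfold tail. destruct (ind_01 head i) as [-> | ->]; ring. }
  set (Sz := sumI (S m) N (fun i => rpow (rearr N z i) (2 * r))).
  set (Su := sumI (S m) N (fun i => rpow (rearr N u i) (2 * r'))).
  assert (HSz : 0 <= Sz) by (apply lsum_nonneg; intros; apply rpow_ge0).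
  assert (HSu : 0 <= Su) by (apply lsum_nonneg; intros; apply rpow_ge0).
  assert (Tz : lsum (seq 0 N) (fun i => rpow (tail z i) r) <= Sz)
    by (apply (lsum_rpow_off_head_le N z iz m); auto; intros; left; auto).
  assert (Tu : lsum (seq 0 N) (fun i => rpow (tail u i) r') <= Su)
    by (apply (lsum_rpow_off_head_le N u iu m); auto; intros; right; auto).
  eapply Rle_trans; [apply sqrt_le_1_alt, (holder _ _ _ r r'); auto|].
  eapply Rle_trans.
  { apply sqrt_le_1_alt, Rmult_le_compat; try apply rpow_ge0;
      (apply rpow_le_base; [apply lsum_nonneg; intros; apply rpow_ge0 | eassumption |]);
      apply Rdiv_le_0_compat; lra. }
  rewrite <- (rpow_inv_double_sq Sz r), <- (rpow_inv_double_sq Su r'), <- Rpow_mult_distr, sqrt_pow2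
    by (try apply Rmult_le_pos; try apply rpow_ge0; auto; lra).
  rewrite Rmult_comm. apply Rmult_le_compat_r; [apply rpow_ge0 | exact HB].
Qed.

End HeadTailSplit.

Lemma rademacher_sum_deviation N r r' (z u : vec) m A B tau :
  1 < r -> 1 < r' -> 1 / r + 1 / r' = 1 -> (m <= N)%nat -> 0 <= tau ->
  sqrt (sumI 1 m (fun i => rearr N u i ^ 2)) <= A ->
  tail_lp N u (2 * r') (S m) <= B ->
  prob N (fun e => 2 * l2norm N z * A + tau * (B * tail_lp N z (2 * r) (S m))
      < Rabs (sumN 0 N (fun i => sgn e i * z i * u i))) <= 2 * exp (- (tau ^ 2 / 2)).
Proof.
  intros Hr Hr' Hrr Hm Ht HA HB.
  destruct (sorting_perm_exists N z) as [iz Hz], (sorting_perm_exists N u) as [iu Hu].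
  set (head := fun i => In i (firstn m iz) \/ In i (firstn m iu)).
  set (a := fun i => (1 - ind head i) * z i * u i).
  eapply Rle_trans;
    [|apply (hoeffding N a tau); [auto | apply (tail_l2_le N m z u iz iu Hz Hu Hm r r' B); auto]].
  apply prob_mono. intros e He.
  assert (Hsplit : sumN 0 N (fun i => sgn e i * z i * u i) =
            lsum (seq 0 N) (fun i => sgn e i * (ind head i * z i * u i)) + rademacher_sum e N a).
  { unfold rademacher_sum. rewrite !sumN_lsum, <- lsum_plus. apply lsum_ext. intros. unfold a. ring. }
  assert (Hhead := head_sum_le N m z u iz iu Hz Hu Hm A HA e).
  rewrite Hsplit in He.
  pose proof (Rabs_triang (lsum (seq 0 N) (fun i => sgn e i * (ind head i * z i * u i)))
                          (rademacher_sum e N a)).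
  fold head in Hhead. lra.
Qed.

(** * Chaining *)

Lemma pow2_le_exp k : 2 ^ k <= exp (INR k).
Proof.
  induction k as [|k IH]; [simpl; rewrite exp_0; lra|].
  rewrite S_INR, exp_plus. simpl.
  assert (2 <= exp 1) by (pose proof (exp_ineq1_le 1); lra).
  rewrite Rmult_comm. apply Rmult_le_compat; try lra. apply pow_le; lra.
Qed.

Lemma exp_opp_le_half_pow k : exp (- INR k) <= (1 / 2) ^ k.
Proof.
  rewrite exp_Ropp. replace ((1 / 2) ^ k) with (/ 2 ^ k)
    by (replace (1 / 2) with (/ 2) by field; now rewrite pow_inv).
  apply Rinv_le_contravar; [apply pow_lt; lra | apply pow2_le_exp].
Qed.

Lemma INR_le_exp_pow2 len k : (len <= 2 ^ (2 ^ k))%nat -> INR len <= exp (2 ^ k).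
Proof.
  intros H. apply le_INR in H. rewrite !pow_INR in H. simpl (INR 2) in H.
  replace (1 + 1) with 2 in H by ring. eapply Rle_trans; [apply H|].
  eapply Rle_trans; [apply pow2_le_exp|]. rewrite pow_INR. simpl (INR 2).
  replace (1 + 1) with 2 by ring. lra.
Qed.

Lemma geometric_tail_le M : lsum (seq 0 M) (fun n => (1 / 2) ^ (n + 2)) <= 1 / 2.
Proof.
  assert (Hsum : lsum (seq 0 M) (fun n => (1 / 2) ^ (n + 2)) = 1 / 2 - (1 / 2) ^ (M + 1)).
  { induction M as [|M IH]; [unfold lsum; simpl; field|].
    rewrite seq_S, lsum_app, IH, Nat.add_0_l, lsum_cons. unfold lsum at 1; simpl fold_right.
    replace (S M + 1)%nat with (S (M + 1)) by lia. replace (M + 2)%nat with (S (M + 1)) by lia.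
    rewrite <- !tech_pow_Rmult. field. }
  rewrite Hsum. assert (0 < (1 / 2) ^ (M + 1)) by (apply pow_lt; lra). lra.
Qed.

(* For [t >= 4] the doubly exponential number of pairs at level [s0 + n] is absorbed by the
   Gaussian tail, with an extra factor [(1/2)^(n+2)] left over for the sum over [n]. *)
Lemma level_union_le s0 n t len : 4 <= t -> (len <= 2 ^ (2 ^ S (s0 + n)) * 2 ^ (2 ^ (s0 + n)))%nat ->
  INR len * (2 * exp (- (t ^ 2 * 2 ^ (s0 + n) / 2)))
  <= 2 * exp (- (1 / 8) * t ^ 2 * 2 ^ s0) * (1 / 2) ^ (n + 2).
Proof.
  intros Ht Hlen. set (X0 := 2 ^ s0). set (X := 2 ^ (s0 + n)).
  assert (Hcount : INR len <= exp (2 * X) * exp X).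
  { apply le_INR in Hlen. rewrite mult_INR in Hlen. eapply Rle_trans; [exact Hlen|].
    pose proof (INR_le_exp_pow2 _ (S (s0 + n)) (le_n _)).
    pose proof (INR_le_exp_pow2 _ (s0 + n) (le_n _)).
    replace (2 ^ S (s0 + n)) with (2 * X) in * by (unfold X; simpl; ring).
    apply Rmult_le_compat; auto using pos_INR. }
  assert (HX0 : 1 <= X0) by (apply pow_R1_Rle; lra).
  assert (HXX : X = X0 * 2 ^ n) by (unfold X, X0; apply pow_add).
  assert (Hn : INR n + 1 <= 2 ^ n).
  { clear. induction n as [|n IH]; [simpl; lra|]. rewrite S_INR. simpl.
    assert (1 <= 2 ^ n) by (apply pow_R1_Rle; lra). lra. }
  assert (HX1 : X0 <= X) by (rewrite HXX; assert (1 <= 2 ^ n) by (apply pow_R1_Rle; lra); nra).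
  assert (HX2 : INR n + 1 <= X) by (rewrite HXX; nra).
  eapply Rle_trans.
  { apply Rmult_le_compat_r; [apply Rmult_le_pos; [lra | apply Rlt_le, exp_pos] | exact Hcount]. }
  eapply Rle_trans; [|apply Rmult_le_compat_l;
    [apply Rmult_le_pos; [lra | apply Rlt_le, exp_pos] | apply (exp_opp_le_half_pow (n + 2))]].
  replace (exp (2 * X) * exp X * (2 * exp (- (t ^ 2 * X / 2))))
    with (2 * exp (2 * X + X + - (t ^ 2 * X / 2))) by (rewrite !exp_plus; ring).
  rewrite Rmult_assoc, <- exp_plus. apply Rmult_le_compat_l; [lra|]. apply exp_le_mono.
  rewrite plus_INR. simpl (INR 2).
  assert (16 <= t ^ 2) by nra. assert (16 * X <= t ^ 2 * X) by nra.
  assert (t ^ 2 * X0 <= t ^ 2 * X) by nra. nra.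
Qed.

(* [bad s w] is the event that the link [w] at level [s] deviates; the links of the chain are
   the points of [L s0] and the differences of points of consecutive levels. *)
Definition some_link_deviates (L : nat -> list vec) (s0 : nat)
    (bad : nat -> vec -> list bool -> Prop) (e : list bool) : Prop :=
  (exists w, In w (L s0) /\ bad s0 w e) \/
  exists n a b, In a (L (S (s0 + n))) /\ In b (L (s0 + n)%nat) /\ bad (s0 + n)%nat (vsub a b) e.

Lemma chaining_union_bound N s0 t (L : nat -> list vec) (bad : nat -> vec -> list bool -> Prop) :
  4 <= t -> (forall s, (length (L s) <= 2 ^ (2 ^ s))%nat) ->
  (forall s w, (s0 <= s)%nat -> prob N (bad s w) <= 2 * exp (- (t ^ 2 * 2 ^ s / 2))) ->
  prob N (some_link_deviates L s0 bad) <= 2 * exp (- (1 / 8) * t ^ 2 * 2 ^ s0).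
Proof.
  intros Ht HL Hbad. unfold some_link_deviates. set (E := exp (- (1 / 8) * t ^ 2 * 2 ^ s0)).
  assert (HE : 0 < E) by apply exp_pos.
  assert (Hlink : forall n,
            prob N (fun e => exists a b, In a (L (S (s0 + n))) /\ In b (L (s0 + n)%nat) /\
                                 bad (s0 + n)%nat (vsub a b) e) <= 2 * E * (1 / 2) ^ (n + 2)).
  { intros n. eapply Rle_trans.
    { apply (prob_mono N _ (fun e => exists ab, In ab (list_prod (L (S (s0 + n))) (L (s0 + n)%nat)) /\
                                  bad (s0 + n)%nat (vsub (fst ab) (snd ab)) e)).
      intros e [a [b [Ha [Hb He]]]]. exists (a, b). split; auto. now apply in_prod. }
    eapply Rle_trans; [apply prob_union_list|].
    eapply Rle_trans; [apply lsum_le; intros; apply Hbad; lia|].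
    rewrite lsum_const. apply level_union_le; auto.
    rewrite length_prod. apply Nat.mul_le_mono; auto. }
  assert (Hstart : prob N (fun e => exists w, In w (L s0) /\ bad s0 w e) <= 2 * E * (1 / 2) ^ 2).
  { eapply Rle_trans; [apply prob_union_list|].
    eapply Rle_trans; [apply lsum_le; intros; apply Hbad; lia|].
    rewrite lsum_const.
    assert (Hlen : (length (L s0) <= 2 ^ (2 ^ S (s0 + 0)) * 2 ^ (2 ^ (s0 + 0)))%nat).
    { rewrite Nat.add_0_r. pose proof (HL s0).
      pose proof (Nat.pow_nonzero 2 (2 ^ S s0) ltac:(lia)). nia. }
    pose proof (level_union_le s0 0 t _ Ht Hlen) as Hs. rewrite Nat.add_0_r in Hs. exact Hs. }
  eapply Rle_trans; [apply prob_or|].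
  assert (prob N (fun e => exists n a b, In a (L (S (s0 + n))) /\ In b (L (s0 + n)%nat) /\
                                   bad (s0 + n)%nat (vsub a b) e) <= E).
  { apply prob_union_nat. intros M. eapply Rle_trans; [apply lsum_le; intros n _; apply Hlink|].
    rewrite lsum_scal. pose proof (geometric_tail_le M). nra. }
  simpl in Hstart. lra.
Qed.

Lemma Un_cv_const c : Un_cv (fun _ => c) c.
Proof. intros eps Heps. exists 0%nat. intros. unfold R_dist. rewrite Rminus_diag, Rabs_R0. auto. Qed.

Lemma Un_cv_abs_le (u : nat -> R) l K : Un_cv u l -> (forall n, Rabs (u n) <= K) -> Rabs l <= K.
Proof.
  intros Hu HK. apply (Rle_cv_lim (Un := fun n => Rabs (u n)) (Vn := fun _ => K) HK).
  - now apply cv_cvabs.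
  - apply Un_cv_const.
Qed.

Lemma Un_cv_lsum (l : list nat) (X : nat -> nat -> R) (x : nat -> R) :
  (forall i, In i l -> Un_cv (fun n => X n i) (x i)) -> Un_cv (fun n => lsum l (X n)) (lsum l x).
Proof.
  induction l as [|a l IH]; intros H.
  - exact (Un_cv_const 0).
  - rewrite lsum_cons. apply (CV_plus (fun n => X n a) (fun n => lsum l (X n))).
    + apply H; simpl; auto.
    + apply IH; intros; apply H; simpl; auto.
Qed.

(* A linear form is bounded along the chain [pi_s0 v + sum_s Delta_s v] by bounding it on
   each link, and the bound passes to the limit [v]. *)
Lemma linear_form_chaining_le N (c v : vec) s0 (pi : nat -> vec -> vec) (nms : nat -> vec -> R)
    (nm : vec -> R) K1 K2 Lam Th :
  0 <= K1 -> 0 <= K2 ->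
  (forall i, Un_cv (fun n => pi s0 v i + sumN s0 n (fun s => vsub (pi (S s) v) (pi s v) i)) (v i)) ->
  (forall n, sumN s0 n (fun s => nms s (vsub (pi (S s) v) (pi s v))) + nms s0 (pi s0 v) <= Lam) ->
  (forall n, sumN s0 n (fun s => sqrt (2 ^ s) * nm (vsub (pi (S s) v) (pi s v)))
             + sqrt (2 ^ s0) * nm (pi s0 v) <= Th) ->
  Rabs (sumN 0 N (fun i => c i * pi s0 v i)) <=
    K1 * nms s0 (pi s0 v) + K2 * (sqrt (2 ^ s0) * nm (pi s0 v)) ->
  (forall s, (s0 <= s)%nat ->
     let w := vsub (pi (S s) v) (pi s v) in
     Rabs (sumN 0 N (fun i => c i * w i)) <= K1 * nms s w + K2 * (sqrt (2 ^ s) * nm w)) ->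
  Rabs (sumN 0 N (fun i => c i * v i)) <= K1 * Lam + K2 * Th.
Proof.
  intros HK1 HK2 Hcv HLam HTh Hstart Hlink.
  set (F := fun w : vec => sumN 0 N (fun i => c i * w i)).
  set (D := fun s => vsub (pi (S s) v) (pi s v)).
  set (P := fun n i => pi s0 v i + sumN s0 n (fun s => D s i)).
  assert (HFP : forall n, F (P n) = F (pi s0 v) + sumN s0 n (fun s => F (D s))).
  { intros n. unfold F, P. rewrite !sumN_lsum.
    rewrite (lsum_ext _ _ (fun i => c i * pi s0 v i + lsum (seq s0 n) (fun s => c i * D s i)))
      by (intros; rewrite sumN_lsum, lsum_scal; ring).
    rewrite lsum_plus, lsum_swap. reflexivity. }
  apply (Un_cv_abs_le (fun n => F (P n))).
  { apply Un_cv_lsum. intros i _.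
    apply (CV_mult (fun _ => c i) (fun n => P n i)); [apply Un_cv_const | apply Hcv]. }
  intros n. rewrite HFP.
  assert (Hsteps : lsum (seq s0 n) (fun s => Rabs (F (D s))) <=
                   lsum (seq s0 n) (fun s => K1 * nms s (D s) + K2 * (sqrt (2 ^ s) * nm (D s)))).
  { apply lsum_le. intros s Hs. apply Hlink. apply in_seq in Hs. lia. }
  rewrite lsum_plus, !lsum_scal in Hsteps.
  pose proof (Rabs_triang (F (pi s0 v)) (sumN s0 n (fun s => F (D s)))).
  pose proof (lsum_abs (seq s0 n) (fun s => F (D s))).
  specialize (HLam n). specialize (HTh n).
  pose proof (Rmult_le_compat_l _ _ _ HK1 HLam). pose proof (Rmult_le_compat_l _ _ _ HK2 HTh).
  unfold F, D, sumN, lsum in *. cbv beta in *. lra.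
Qed.

Lemma tail_lp_antimono N x p k k' : 0 < p -> (k <= k')%nat -> (k' <= S N)%nat ->
  tail_lp N x p k' <= tail_lp N x p k.
Proof.
  intros Hp Hk Hk'. apply rpow_le_base; [apply lsum_nonneg; intros; apply rpow_ge0 | |].
  - apply sumI_antimono; auto. intros; apply rpow_ge0.
  - apply Rdiv_le_0_compat; lra.
Qed.

Lemma level_deviation N r r' (z w : vec) k A B tau :
  1 < r -> 1 < r' -> 1 / r + 1 / r' = 1 -> (1 <= k <= S N)%nat -> 0 <= tau ->
  prob N (fun e => (head_l2 N w k <= A /\ tail_lp N w (2 * r') k <= B) /\
     2 * l2norm N z * A + tau * (B * tail_lp N z (2 * r) k)
      < Rabs (sumN 0 N (fun i => sgn e i * z i * w i))) <= 2 * exp (- (tau ^ 2 / 2)).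
Proof.
  intros Hr Hr' Hrr Hk Ht. unfold head_l2, tail_lp.
  destruct (classic (sqrt (sumI 1 (k - 1) (fun i => rearr N w i ^ 2)) <= A /\
     rpow (sumI k N (fun i => rpow (rearr N w i) (2 * r'))) (1 / (2 * r')) <= B)) as [[HA HB] | Hn].
  - replace k with (S (k - 1)) in HB |- * by lia.
    eapply Rle_trans; [|apply (rademacher_sum_deviation N r r' z w (k - 1) A B tau); auto; lia].
    apply prob_mono. intros e [_ He]. exact He.
  - rewrite prob_empty; [pose proof (exp_pos (- (tau ^ 2 / 2))); lra|].
    intros e [He _]. auto.
Qed.

Definition link_deviates N r r' (z : vec) (nms : nat -> vec -> R) (nm : vec -> R) (j : nat -> nat)
    (t : R) (s : nat) (w : vec) (e : list bool) : Prop :=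
  (head_l2 N w (j s) <= nms s w /\
   tail_lp N w (2 * r') (j s) <= nm w * rpow (INR N) (1 / (2 * r'))) /\
  2 * l2norm N z * nms s w +
    t * sqrt (2 ^ s) * (nm w * rpow (INR N) (1 / (2 * r')) * tail_lp N z (2 * r) (j s))
  < Rabs (sumN 0 N (fun i => sgn e i * z i * w i)).

Lemma link_deviates_prob N r r' z nms nm j t s w :
  1 < r -> 1 < r' -> 1 / r + 1 / r' = 1 -> (1 <= j s <= S N)%nat -> 0 <= t ->
  prob N (link_deviates N r r' z nms nm j t s w) <= 2 * exp (- (t ^ 2 * 2 ^ s / 2)).
Proof.
  intros Hr Hr' Hrr Hj Ht.
  replace (t ^ 2 * 2 ^ s) with ((t * sqrt (2 ^ s)) ^ 2)
    by (rewrite Rpow_mult_distr, pow2_sqrt; [ring | apply pow_le; lra]).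
  apply level_deviation; auto. apply Rmult_le_pos; [lra | apply sqrt_pos].
Qed.

Lemma card_le_enumeration (A : nat -> vec -> Prop) (k : nat -> nat) :
  (forall s, card_le (A s) (k s)) ->
  exists L : nat -> list vec, forall s, (length (L s) <= k s)%nat /\ (forall x, A s x -> In x (L s)).
Proof.
  intros Hcard. exists (fun s => proj1_sig (constructive_indefinite_description _ (Hcard s))).
  intros s. destruct (constructive_indefinite_description _ (Hcard s)) as [l Hl]. exact Hl.
Qed.

Lemma no_deviation_chaining_le N r r' (z : vec) V s0 Vs pi nms nm j Lam Th t L e :
  0 < r -> StructA N r' V s0 Vs pi nms nm j ->
  is_lub (Lambda_set V s0 pi nms) Lam -> is_lub (Theta_set V s0 pi nm) Th -> 0 <= t ->
  (forall s x, Vs s x -> In x (L s)) ->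
  ~ some_link_deviates L s0 (link_deviates N r r' z nms nm j t) e ->
  forall v, V v ->
  Rabs (sumN 0 N (fun i => sgn e i * z i * v i)) <=
  2 * l2norm N z * Lam + t * Th * rpow (INR N) (1 / (2 * r')) * tail_lp N z (2 * r) (j s0).
Proof.
  intros Hr HS HLam HTh Ht HL He v Hv.
  destruct HS as [HVin [HVs [_ [_ [Hpi [Hconv [_ [Hnm [Hjmono [Hjb Hcond]]]]]]]]]].
  set (Rn := rpow (INR N) (1 / (2 * r'))). set (Zs := fun s => tail_lp N z (2 * r) (j s)).
  assert (HZs : forall s, (s0 <= s)%nat -> Zs s <= Zs s0)
    by (intros s Hs; apply tail_lp_antimono; [lra | apply Hjmono | apply Hjb]; auto).
  assert (HK : 0 <= t * Rn * Zs s0) by (repeat apply Rmult_le_pos; try lra; apply rpow_ge0).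
  assert (Hlink : forall s w, (s0 <= s)%nat -> inRN N w ->
            ~ link_deviates N r r' z nms nm j t s w e ->
            head_l2 N w (j s) <= nms s w -> tail_lp N w (2 * r') (j s) <= nm w * Rn ->
            Rabs (sumN 0 N (fun i => sgn e i * z i * w i)) <=
            2 * l2norm N z * nms s w + t * Rn * Zs s0 * (sqrt (2 ^ s) * nm w)).
  { intros s w Hs Hw Hnb Hc1 Hc2. apply Rnot_lt_le. intros Hlt. apply Hnb. split; [split; auto|].
    assert (0 <= t * sqrt (2 ^ s) * nm w * Rn).
    { pose proof (proj1 Hnm w Hw). pose proof (sqrt_pos (2 ^ s)).
      repeat apply Rmult_le_pos; try lra; apply rpow_ge0. }
    specialize (HZs s Hs). fold Rn. eapply Rle_lt_trans; [|exact Hlt].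
    apply Rplus_le_compat_l. fold (Zs s). nra. }
  assert (Hin : forall s, inRN N (pi s v)) by (intros s; apply HVin, (HVs s), Hpi; auto).
  enough (Rabs (sumN 0 N (fun i => sgn e i * z i * v i)) <=
          2 * l2norm N z * Lam + t * Rn * Zs s0 * Th) by (unfold Zs in *; nra).
  apply (linear_form_chaining_le N (fun i => sgn e i * z i) v s0 pi nms nm); auto.
  - apply Rmult_le_pos; [lra | apply sqrt_pos].
  - intros n. apply HLam. exists v, n. auto.
  - intros n. apply HTh. exists v, n. auto.
  - destruct (Hcond s0 v (le_n _) Hv) as [_ [_ [Hc1 Hc2]]].
    apply Hlink; auto. intros Hb. apply He. left.
    exists (pi s0 v). split; [apply HL, Hpi, Hv | exact Hb].
  - intros s Hs. destruct (Hcond s v Hs Hv) as [Hc1 [Hc2 _]]. apply Hlink; auto.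
    + intros i Hi. unfold vsub. rewrite (Hin (S s) i Hi), (Hin s i Hi). ring.
    + intros Hb. apply He. right. exists (s - s0)%nat, (pi (S s) v), (pi s v).
      replace (s0 + (s - s0))%nat with s by lia.
      split; [|split]; [apply HL, Hpi, Hv | apply HL, Hpi, Hv | exact Hb].
Qed.

Theorem mainTheorem5 :
  exists c : R, 0 < c /\
  forall (N : nat) (r r' : R), 1 < r -> 1 < r' -> 1 / r + 1 / r' = 1 ->
  forall (z : vec), inRN N z ->
  forall (V : vec -> Prop) (s0 : nat) (Vs : nat -> vec -> Prop)
         (pi : nat -> vec -> vec) (nms : nat -> vec -> R) (nm : vec -> R)
         (j : nat -> nat),
  StructA N r' V s0 Vs pi nms nm j ->
  forall Lam Th : R,
  is_lub (Lambda_set V s0 pi nms) Lam ->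
  is_lub (Theta_set V s0 pi nm) Th ->
  forall t : R, 4 <= t ->
  prob N (fun e => forall v, V v ->
     Rabs (sumN 0 N (fun i => sgn e i * z i * v i))
       <= 2 * l2norm N z * Lam
          + t * Th * rpow (INR N) (1 / (2 * r'))
            * rpow (sumI (j s0) N (fun i => rpow (rearr N z i) (2 * r))) (1 / (2 * r)))
  >= 1 - 2 * exp (- c * t ^ 2 * 2 ^ s0).
Proof.
  exists (1 / 8). split; [lra|].
  intros N r r' Hr Hr' Hrr z _ V s0 Vs pi nms nm j HS Lam Th HLam HTh t Ht.
  pose proof HS as (_ & _ & _ & Hcard & _ & _ & _ & _ & _ & Hjb & _).
  destruct (card_le_enumeration Vs (fun s => 2 ^ (2 ^ s))%nat Hcard) as [L HL].
  set (bad := link_deviates N r r' z nms nm j t).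
  assert (HBad : prob N (some_link_deviates L s0 bad) <= 2 * exp (- (1 / 8) * t ^ 2 * 2 ^ s0)).
  { apply chaining_union_bound; [exact Ht | apply HL |].
    intros s w Hs. apply link_deviates_prob; auto; lra. }
  match goal with |- prob N ?P >= _ =>
    pose proof (prob_compl N P);
    assert (prob N (fun e => ~ P e) <= prob N (some_link_deviates L s0 bad)) end.
  { apply prob_mono. intros e Hn. apply NNPP. intros Hgood. apply Hn.
    apply (no_deviation_chaining_le N r r' z V s0 Vs pi nms nm j Lam Th t L e); auto; [lra | lra |].
    apply HL. }
  lra.
Qed.
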